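(* Let $\alpha,\beta>0$, let $g(n)=\sum_{i=0}^k c_in^i$ be a polynomial of degree $k\ge1$ (so $c_k\ne0$), and let $x$ be a sequence (with given $x(1)$) satisfying \[x(n)=\alpha\,x(\lfloor n/2\rfloor)+\beta\,x(\lceil n/2\rceil)+g(n)\qquad(n\ge2).\] Let $d_0\coloneqq(1-\beta)x(1)-g(1)+g(0)$ and $d_1\coloneqq g(1)-(1-\beta)x(1)$. Then, as $n\to\infty$, with suitable $1$-periodic continuous functions $\Phi$ and $\Psi$: (1a) If $\alpha+\beta>2^k$ and $2^k>\max\{\alpha,\beta\}$, then $x(n)=n^{\log_2(\alpha+\beta)}\Phi(\{\log_2n\})+n^k\Psi(\{\log_2n\})+O(n^{\log_2\max\{\alpha,\beta\}})$. (1b) If $\alpha+\beta>2^k$ and $\max\{\alpha,\beta\}\ge2^k$, then $x(n)=n^{\log_2(\alpha+\beta)}\Phi(\{\log_2n\})+O\big(n^{\log_2\max\{\alpha,\beta\}}(\log n)^{[\max\{\alpha,\beta\}=2^k]}\big)$. (2) If $\alpha+\beta=2^k$, then for every $\varepsilon>0$, $x(n)=n^k(\log n)\Phi(\{\log_2n\})+n^k\Psi(\{\log_2n\})+O\big(n^{\log_2\max\{\alpha,\beta\}+[\alpha=\beta]\varepsilon}\big)$. (3) If $2^k>\alpha+\beta>2^{k-1}$, then for every $\varepsilon>0$, $x(n)=n^k\Phi(\{\log_2n\})+n^{\log_2(\alpha+\beta)}\Psi(\{\log_2n\})+O\big(n^{\log_2\max\{\alpha,\beta,2^{k-1}\}+[\max\{\alpha,\beta\}=2^{k-1}]\varepsilon}(\log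 n)^{[\max\{\alpha,\beta\}<2^{k-1}]}\big)$. (4) If $2^{k-1}\ge\alpha+\beta$, then $x(n)=n^k\Phi(\{\log_2n\})+O(n^{k-1}(\log n)^E)$, where $E\coloneqq1+[\alpha+\beta=2^{k-1}]\big([k\ge2\text{ and }c_{k-1}\ne0]+[k=1\text{ and }d_0+d_1\ne0]\big)$.
   Context: $\{z\}=z-\lfloor z\rfloor$ denotes the fractional part of a real number $z$. Iverson's bracket: $[S]=1$ if the statement $S$ is true and $0$ otherwise. The values $g(0),g(1)$ are the values of the polynomial $g$ (they do not enter the recurrence). *)

From Stdlib Require Import Reals Lra Lia ClassicalEpsilon.
Open Scope R_scope.

Definition iv (P : Prop) : nat :=
  if excluded_middle_informative P then 1%nat else 0%nat.

Definition log2 (t : R) : R := ln t / ln 2.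

(* fractional part {z} = z - floor z  (Stdlib: Int_part = floor) *)
Definition frac (z : R) : R := frac_part z.

Definition poly_eval (c : nat -> R) (k : nat) (t : R) : R :=
  sum_f_R0 (fun i => c i * t ^ i) k.

Definition periodic1_cont (F : R -> R) : Prop :=
  continuity F /\ forall t, F (t + 1) = F t.

Definition bigO (f b : nat -> R) : Prop :=
  exists C : R, exists N : nat, forall n : nat, (N <= n)%nat -> Rabs (f n) <= C * b n.

Definition npow (n : nat) (a : R) : R := Rpower (INR n) a.

Definition satisfies_rec (alpha beta : R) (c : nat -> R) (k : nat) (x : nat -> R) : Prop :=
  forall n : nat, (2 <= n)%nat ->
    x n = alpha * x (n / 2)%nat + beta * x ((n + 1) / 2)%nat + poly_eval c k (INR n).

Definition rd0 (beta : R) (c : nat -> R) (k : nat) (x : nat -> R) : R :=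
  (1 - beta) * x 1%nat - poly_eval c k 1 + poly_eval c k 0.
Definition rd1 (beta : R) (c : nat -> R) (k : nat) (x : nat -> R) : R :=
  poly_eval c k 1 - (1 - beta) * x 1%nat.

(* Let s := α + β and P(t) := Σ_(i ≤ k) (A_i t^i + B_i t^i log2 t), where
   A_i = c_i 2^i / (2^i - s) and B_i = 0 if s ≠ 2^i, while A_i = 0 and B_i = c_i if s = 2^i;
   then P(2t) = s P(t) + g(2t).
   Hence y := x - P satisfies y(2m) = s y(m) exactly, and y(2m+1) = α y(m) + β y(m+1) + r(m) with
   a defect r(m) = O(m^(k-1) log m), even O(m^(k-1)) when s ≠ 2^k.

   If s > 2^(k-1), the increments y(n+1) - y(n) grow like μ^(log2 n) for some μ < s, so
   T(u) := lim_j y(⌊2^j u⌋) / s^j exists, is continuous for u > 1, and satisfies T(2u) = s T(u)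
   and T(n) = y(n).  Thus y(n) = n^(log2 s) Φ({log2 n}) exactly, for the continuous 1-periodic
   Φ(t) := 2^(-t log2 s) T(2^t); the top term of P gives the other main term and the lower terms
   of P are O(n^(k-1)).  If s ≤ 2^(k-1), induction over dyadic blocks gives
   y(n) = O(n^(k-1) log n). *)

From Stdlib Require Import Reals Lra Lia ZArith.
From Coquelicot Require Import Coquelicot.
Open Scope R_scope.

Lemma half_double m : ((2 * m) / 2 = m)%nat.
Proof. symmetry; apply (Nat.div_unique _ _ _ 0); lia. Qed.

Lemma half_double_succ m : ((2 * m + 1) / 2 = m)%nat.
Proof. symmetry; apply (Nat.div_unique _ _ _ 1); lia. Qed.

Lemma half_double_succ_succ m : ((2 * m + 1 + 1) / 2 = m + 1)%nat.
Proof. symmetry; apply (Nat.div_unique _ _ _ 0); lia. Qed.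

Lemma nat_even_or_odd n : exists m, n = (2 * m)%nat \/ n = (2 * m + 1)%nat.
Proof. destruct (Nat.Even_or_Odd n) as [[m Hm]|[m Hm]]; exists m; lia. Qed.

Lemma ln2_pos : 0 < ln 2.
Proof. pose proof ln_lt_2; lra. Qed.

Lemma two_pow_pos i : 0 < 2 ^ i.
Proof. apply pow_lt; lra. Qed.

Lemma INR_pow2 j : INR (2 ^ j) = 2 ^ j.
Proof. rewrite pow_INR. reflexivity. Qed.

Lemma ln_le_sub_1 t : 0 < t -> ln t <= t - 1.
Proof. intros Ht. pose proof (exp_ineq1_le (ln t)) as He. rewrite exp_ln in He; lra. Qed.

Lemma ln_sub_le u v : 0 < v <= u -> ln u - ln v <= (u - v) / v.
Proof.
  intros Hv. replace (ln u - ln v) with (ln (u / v)).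
  - replace ((u - v) / v) with (u / v - 1) by (field; lra).
    apply ln_le_sub_1, Rdiv_lt_0_compat; lra.
  - unfold Rdiv. rewrite ln_mult, ln_Rinv; try lra. apply Rinv_0_lt_compat; lra.
Qed.

Lemma ln_sub_abs_le u v m : 0 < m -> m <= u -> m <= v ->
  Rabs (ln u - ln v) <= Rabs (u - v) / m.
Proof.
  intros Hm Hu Hv.
  assert (Hinv : forall p q, m <= q <= p -> (p - q) / q <= (p - q) / m).
  { intros p q Hpq. unfold Rdiv. apply Rmult_le_compat_l; [lra|].
    apply Rinv_le_contravar; lra. }
  destruct (Rle_dec v u).
  - assert (ln v <= ln u) by (apply ln_le; lra).
    pose proof (ln_sub_le u v ltac:(lra)). pose proof (Hinv u v ltac:(lra)).
    rewrite !Rabs_right by lra. lra.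
  - assert (ln u <= ln v) by (apply ln_le; lra).
    pose proof (ln_sub_le v u ltac:(lra)). pose proof (Hinv v u ltac:(lra)).
    rewrite (Rabs_minus_sym (ln u)), (Rabs_minus_sym u), !Rabs_right by lra. lra.
Qed.

Lemma pow_sub_abs_le u v w i : 0 <= u <= w -> 0 <= v <= w ->
  Rabs (u ^ i - v ^ i) <= INR i * Rabs (u - v) * w ^ (i - 1).
Proof.
  intros Hu Hv. induction i as [|i IH].
  - simpl. rewrite Rminus_diag, Rabs_R0. lra.
  - replace (u ^ S i - v ^ S i) with (u * (u ^ i - v ^ i) + (u - v) * v ^ i) by (simpl; ring).
    replace (S i - 1)%nat with i by lia. rewrite S_INR.
    assert (Hvi : 0 <= v ^ i <= w ^ i) by (split; [apply pow_le | apply pow_incr]; lra).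
    assert (Hd : 0 <= Rabs (u - v)) by apply Rabs_pos.
    assert (Hui : u * Rabs (u ^ i - v ^ i) <= INR i * Rabs (u - v) * w ^ i).
    { destruct i as [|i].
      - simpl. rewrite Rminus_diag, Rabs_R0. lra.
      - replace (S i - 1)%nat with i in IH by lia. change (w ^ S i) with (w * w ^ i).
        replace (INR (S i) * Rabs (u - v) * (w * w ^ i))
          with (w * (INR (S i) * Rabs (u - v) * w ^ i)) by ring.
        apply Rmult_le_compat; try lra. apply Rabs_pos. }
    eapply Rle_trans; [apply Rabs_triang|].
    rewrite !Rabs_mult, (Rabs_right u), (Rabs_right (v ^ i)) by lra.
    assert (Rabs (u - v) * v ^ i <= Rabs (u - v) * w ^ i) by (apply Rmult_le_compat_l; lra).
    lra.
Qed.

Lemma pow_mul_ln_sub_abs_le m u v i : 1 <= m -> m <= u <= m + 1 -> m <= v <= m + 1 ->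
  Rabs (u - v) <= / 2 ->
  Rabs (u ^ i * ln u - v ^ i * ln v)
  <= INR i * (m + 1) ^ (i - 1) * ln (m + 1) + (m + 1) ^ (i - 1).
Proof.
  intros Hm Hu Hv Huv.
  replace (u ^ i * ln u - v ^ i * ln v) with ((u ^ i - v ^ i) * ln u + v ^ i * (ln u - ln v))
    by ring.
  assert (Hlu : 0 <= ln u <= ln (m + 1)).
  { rewrite <- ln_1. split; apply ln_le; lra. }
  assert (Hvi : 0 <= v ^ i <= (m + 1) ^ i) by (split; [apply pow_le | apply pow_incr]; lra).
  assert (Hp : 0 <= (m + 1) ^ (i - 1)) by (apply pow_le; lra).
  assert (HI : 0 <= INR i) by apply pos_INR.
  assert (Hpow : Rabs (u ^ i - v ^ i) <= INR i * (m + 1) ^ (i - 1)).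
  { eapply Rle_trans; [apply (pow_sub_abs_le _ _ (m + 1)); lra|].
    assert (0 <= INR i * (m + 1) ^ (i - 1)) by (apply Rmult_le_pos; lra).
    pose proof (Rabs_pos (u - v)). nra. }
  assert (Hln : Rabs (ln u - ln v) <= / 2 / m).
  { eapply Rle_trans; [apply (ln_sub_abs_le _ _ m); lra|].
    unfold Rdiv. apply Rmult_le_compat_r; [left; apply Rinv_0_lt_compat|]; lra. }
  (* (m+1)/(2m) <= 1 absorbs one power of m + 1 *)
  assert (Hvln : (m + 1) ^ i * (/ 2 / m) <= (m + 1) ^ (i - 1)).
  { destruct i as [|i].
    - simpl. apply Rmult_le_reg_r with (2 * m); [lra|].
      field_simplify; lra.
    - replace (S i - 1)%nat with i by lia. change ((m + 1) ^ S i) with ((m + 1) * (m + 1) ^ i).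
      assert (0 <= (m + 1) ^ i) by (apply pow_le; lra).
      replace ((m + 1) * (m + 1) ^ i * (/ 2 / m)) with ((m + 1) ^ i * ((m + 1) / (2 * m)))
        by (field; lra).
      rewrite <- (Rmult_1_r ((m + 1) ^ i)) at 2. apply Rmult_le_compat_l; [lra|].
      apply Rmult_le_reg_r with (2 * m); [lra|]. field_simplify; lra. }
  eapply Rle_trans; [apply Rabs_triang|]. rewrite !Rabs_mult.
  rewrite (Rabs_right (ln u)), (Rabs_right (v ^ i)) by lra.
  apply Rplus_le_compat.
  - apply Rmult_le_compat; try lra. apply Rabs_pos.
  - apply Rle_trans with ((m + 1) ^ i * (/ 2 / m)); [|exact Hvln].
    apply Rmult_le_compat; try lra. apply Rabs_pos.
Qed.

(** * A particular solution *)

Definition coefA (s : R) (c : nat -> R) (i : nat) : R :=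
  if Req_dec_T s (2 ^ i) then 0 else c i * 2 ^ i / (2 ^ i - s).

Definition coefB (s : R) (c : nat -> R) (i : nat) : R :=
  if Req_dec_T s (2 ^ i) then c i else 0.

Definition part_term (s : R) (c : nat -> R) (i : nat) (t : R) : R :=
  coefA s c i * t ^ i + coefB s c i * (t ^ i * log2 t).

Definition part_sol (s : R) (c : nat -> R) (k : nat) (t : R) : R :=
  sum_f_R0 (fun i => part_term s c i t) k.

Lemma coefA_res s c i : s = 2 ^ i -> coefA s c i = 0.
Proof. intros. unfold coefA. destruct (Req_dec_T s (2 ^ i)); easy. Qed.

Lemma coefB_res s c i : s = 2 ^ i -> coefB s c i = c i.
Proof. intros. unfold coefB. destruct (Req_dec_T s (2 ^ i)); easy. Qed.

Lemma coefB_nonres s c i : s <> 2 ^ i -> coefB s c i = 0.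
Proof. intros. unfold coefB. destruct (Req_dec_T s (2 ^ i)); easy. Qed.

Lemma part_term_double s c i u : 0 < u ->
  part_term s c i (2 * u) = s * part_term s c i u + c i * (2 * u) ^ i.
Proof.
  intros Hu. pose proof ln2_pos. unfold part_term, coefA, coefB, log2.
  rewrite Rpow_mult_distr, ln_mult by lra.
  destruct (Req_dec_T s (2 ^ i)) as [->|Hs].
  - field. lra.
  - field. split; [lra|]. intros E. apply Hs. lra.
Qed.

Lemma part_sol_double s c k u : 0 < u ->
  part_sol s c k (2 * u) = s * part_sol s c k u + poly_eval c k (2 * u).
Proof.
  intros Hu. unfold part_sol, poly_eval. induction k as [|k IH]; cbn [sum_f_R0].
  - apply part_term_double, Hu.
  - rewrite IH, part_term_double by exact Hu. ring.
Qed.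

Lemma sum_f_R0_mult_r (f : nat -> R) z k :
  sum_f_R0 (fun i => f i * z) k = sum_f_R0 f k * z.
Proof. induction k; simpl; [|rewrite IHk]; ring. Qed.

Definition part_weight (s : R) (c : nat -> R) (k : nat) : R :=
  sum_f_R0 (fun i => Rabs (coefA s c i) + Rabs (coefB s c i) / ln 2) k.

Lemma part_weight_nonneg s c k : 0 <= part_weight s c k.
Proof.
  apply cond_pos_sum. intros i. pose proof ln2_pos.
  pose proof (Rabs_pos (coefA s c i)). pose proof (Rabs_pos (coefB s c i)).
  assert (0 <= Rabs (coefB s c i) / ln 2) by (apply Rdiv_le_0_compat; lra). lra.
Qed.

Section Variation.

Variables (s : R) (c : nat -> R) (m u v : R).
Hypotheses (Hm : 1 <= m) (Hu : m <= u <= m + 1) (Hv : m <= v <= m + 1)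
  (Huv : Rabs (u - v) <= / 2).

Let M := m + 1.

Lemma part_term_sub_abs_le i :
  Rabs (part_term s c i u - part_term s c i v)
  <= Rabs (coefA s c i) * (INR i * M ^ (i - 1))
     + Rabs (coefB s c i) / ln 2 * (INR i * M ^ (i - 1) * ln M + M ^ (i - 1)).
Proof.
  pose proof ln2_pos. unfold part_term, log2.
  replace (coefA s c i * u ^ i + coefB s c i * (u ^ i * (ln u / ln 2))
           - (coefA s c i * v ^ i + coefB s c i * (v ^ i * (ln v / ln 2))))
    with (coefA s c i * (u ^ i - v ^ i) + coefB s c i / ln 2 * (u ^ i * ln u - v ^ i * ln v))
    by (field; lra).
  eapply Rle_trans; [apply Rabs_triang|]. rewrite !Rabs_mult.
  unfold Rdiv. rewrite Rabs_mult, (Rabs_right (/ ln 2))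
    by (apply Rle_ge, Rlt_le, Rinv_0_lt_compat; lra).
  apply Rplus_le_compat; apply Rmult_le_compat_l.
  - apply Rabs_pos.
  - eapply Rle_trans; [apply (pow_sub_abs_le _ _ M); unfold M; lra|].
    assert (0 <= INR i * M ^ (i - 1))
      by (apply Rmult_le_pos; [apply pos_INR | apply pow_le; unfold M; lra]).
    pose proof (Rabs_pos (u - v)). nra.
  - apply Rmult_le_pos; [apply Rabs_pos | left; apply Rinv_0_lt_compat; lra].
  - apply pow_mul_ln_sub_abs_le; lra.
Qed.

Lemma part_sol_sub_abs_le_of_terms k Q :
  (forall i, (i <= k)%nat -> Rabs (part_term s c i u - part_term s c i v)
                              <= (Rabs (coefA s c i) + Rabs (coefB s c i) / ln 2) * Q) ->
  Rabs (part_sol s c k u - part_sol s c k v) <= part_weight s c k * Q.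
Proof.
  intros Hterm. unfold part_sol, part_weight. rewrite <- minus_sum, <- sum_f_R0_mult_r.
  eapply Rle_trans; [apply sum_f_R0_triangle|]. apply sum_Rle. exact Hterm.
Qed.

Lemma part_sol_sub_abs_le k :
  Rabs (part_sol s c k u - part_sol s c k v)
  <= part_weight s c k * ((INR k + 1) * M ^ (k - 1) * (1 + ln M)).
Proof.
  apply part_sol_sub_abs_le_of_terms. intros i Hi.
  eapply Rle_trans; [apply part_term_sub_abs_le|]. rewrite Rmult_plus_distr_r.
  assert (HlnM : 0 <= ln M) by (rewrite <- ln_1; apply ln_le; unfold M; lra).
  assert (Hpow : 0 <= M ^ (i - 1) <= M ^ (k - 1))
    by (split; [apply pow_le | apply Rle_pow]; unfold M; lra || lia).
  assert (HI : 0 <= INR i <= INR k) by (split; [apply pos_INR | apply le_INR; lia]).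
  assert (INR i * M ^ (i - 1) <= INR k * M ^ (k - 1)) by (apply Rmult_le_compat; lra).
  assert (0 <= INR k * M ^ (k - 1)) by (apply Rmult_le_pos; lra).
  apply Rplus_le_compat; apply Rmult_le_compat_l.
  - apply Rabs_pos.
  - nra.
  - apply Rdiv_le_0_compat; [apply Rabs_pos | apply ln2_pos].
  - nra.
Qed.

Lemma part_sol_sub_abs_le_nonres k : coefB s c k = 0 ->
  Rabs (part_sol s c k u - part_sol s c k v) <= part_weight s c k * ((INR k + 1) * M ^ (k - 1)).
Proof.
  intros HBk. apply part_sol_sub_abs_le_of_terms. intros i Hi.
  eapply Rle_trans; [apply part_term_sub_abs_le|]. rewrite Rmult_plus_distr_r.
  assert (HM : 1 <= M) by (unfold M; lra).
  assert (Hpow : 0 <= M ^ (i - 1) <= M ^ (k - 1))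
    by (split; [apply pow_le | apply Rle_pow]; lra || lia).
  assert (HI : 0 <= INR i <= INR k) by (split; [apply pos_INR | apply le_INR; lia]).
  assert (INR i * M ^ (i - 1) <= INR k * M ^ (k - 1)) by (apply Rmult_le_compat; lra).
  assert (HB : 0 <= Rabs (coefB s c i) / ln 2)
    by (apply Rdiv_le_0_compat; [apply Rabs_pos | apply ln2_pos]).
  apply Rplus_le_compat; [apply Rmult_le_compat_l; [apply Rabs_pos | lra]|].
  destruct (Nat.eq_dec i k) as [->|Hik].
  - rewrite HBk, Rabs_R0. unfold Rdiv. rewrite !Rmult_0_l. lra.
  - apply Rmult_le_compat_l; [exact HB|].
    (* below the resonant degree the logarithm costs at most one power of M *)
    assert (Hln : INR i * M ^ (i - 1) * ln M <= INR (k - 1) * M ^ (k - 1)).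
    { destruct i as [|i]; [simpl; rewrite Rmult_0_l, Rmult_0_l; apply Rmult_le_pos;
        [apply pos_INR | lra]|].
      replace (S i - 1)%nat with i by lia.
      assert (0 <= M ^ i <= M ^ (k - 1)) by (split; [apply pow_le | apply Rle_pow]; lra || lia).
      assert (HSi : 0 <= INR (S i) <= INR (k - 1)) by (split; [apply pos_INR | apply le_INR; lia]).
      pose proof (ln_le_sub_1 M ltac:(lra)).
      assert (M ^ i * ln M <= M ^ (k - 1)).
      { apply Rle_trans with (M ^ i * M); [apply Rmult_le_compat_l; lra|].
        rewrite Rmult_comm. change (M * M ^ i) with (M ^ S i). apply Rle_pow; [lra | lia]. }
      rewrite Rmult_assoc. apply Rmult_le_compat; try lra.
      apply Rmult_le_pos; [lra|]. rewrite <- ln_1. apply ln_le; lra. }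
    rewrite minus_INR in Hln by lia. simpl (INR 1) in Hln. lra.
Qed.

End Variation.

(** * The homogeneous part and its odd defect *)

(* r(m), from 2m + 1 = 2 (m + 1/2) and P(2t) = s P(t) + g(2t). *)
Definition odd_defect (a b : R) (c : nat -> R) (k m : nat) : R :=
  let P := part_sol (a + b) c k in
  a * (P (INR m) - P (INR m + / 2)) + b * (P (INR m + 1) - P (INR m + / 2)).

Lemma odd_defect_abs_le a b c k m B : 0 < a -> 0 < b -> (1 <= m)%nat ->
  (forall u v, INR m <= u <= INR m + 1 -> INR m <= v <= INR m + 1 -> Rabs (u - v) <= / 2 ->
     Rabs (part_sol (a + b) c k u - part_sol (a + b) c k v) <= B) ->
  Rabs (odd_defect a b c k m) <= (a + b) * B.
Proof.
  intros Ha Hb Hm HB. assert (1 <= INR m) by (apply (le_INR 1); lia).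
  unfold odd_defect. eapply Rle_trans; [apply Rabs_triang|].
  rewrite !Rabs_mult, (Rabs_right a), (Rabs_right b) by lra.
  assert (Rabs (part_sol (a + b) c k (INR m) - part_sol (a + b) c k (INR m + / 2)) <= B)
    by (apply HB; try rewrite Rabs_left1; lra).
  assert (Rabs (part_sol (a + b) c k (INR m + 1) - part_sol (a + b) c k (INR m + / 2)) <= B)
    by (apply HB; try rewrite Rabs_right; lra).
  nra.
Qed.

Section HomogeneousPart.

Variables (a b : R) (c : nat -> R) (k : nat) (x : nat -> R).
Hypothesis Hrec : satisfies_rec a b c k x.

Definition hom_part (n : nat) : R := x n - part_sol (a + b) c k (INR n).

Lemma hom_double m : (1 <= m)%nat -> hom_part (2 * m) = (a + b) * hom_part m.
Proof.
  intros Hm. unfold hom_part. rewrite Hrec by lia.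
  rewrite half_double, half_double_succ.
  rewrite mult_INR, part_sol_double by (apply lt_0_INR; lia).
  replace (INR 2) with 2 by (simpl; ring). ring.
Qed.

Lemma hom_double_succ m : (1 <= m)%nat ->
  hom_part (2 * m + 1) = a * hom_part m + b * hom_part (m + 1) + odd_defect a b c k m.
Proof.
  intros Hm. unfold hom_part, odd_defect. rewrite Hrec by lia.
  rewrite half_double_succ, half_double_succ_succ.
  replace (INR (2 * m + 1)) with (2 * (INR m + / 2)) by (rewrite plus_INR, mult_INR; simpl; field).
  rewrite part_sol_double by (pose proof (pos_INR m); lra). rewrite plus_INR, INR_1. ring.
Qed.

End HomogeneousPart.

(** * Growth of the homogeneous part on dyadic blocks *)

Lemma bernoulli_ineq q j : 1 <= q -> 1 + INR j * (q - 1) <= q ^ j.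
Proof.
  intros Hq. induction j as [|j IH]; [simpl; lra|].
  rewrite S_INR. change (q ^ S j) with (q * q ^ j).
  assert (0 <= INR j) by apply pos_INR.
  assert (0 <= INR j * ((q - 1) * (q - 1))) by (apply Rmult_le_pos; nra).
  nra.
Qed.

Lemma linear_le_geom r : 1 < r -> exists C, 0 < C /\ forall j, INR j + 1 <= C * r ^ j.
Proof.
  intros Hr. assert (Hi : 0 < / (r - 1)) by (apply Rinv_0_lt_compat; lra).
  exists (1 + / (r - 1)). split; [lra|]. intros j.
  pose proof (bernoulli_ineq r j ltac:(lra)). pose proof (pos_INR j).
  apply Rle_trans with ((1 + / (r - 1)) * (1 + INR j * (r - 1))); [|apply Rmult_le_compat_l; lra].
  replace ((1 + / (r - 1)) * (1 + INR j * (r - 1)))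
    with (1 + / (r - 1) + INR j * (r - 1) + INR j) by (field; lra).
  nra.
Qed.

Lemma pow_mul_ln_le_geom d mu : 2 ^ d < mu ->
  exists C, 0 <= C /\ forall J M, 1 <= M <= 2 ^ S J -> M ^ d * (1 + ln M) <= C * mu ^ J.
Proof.
  intros Hmu. pose proof (two_pow_pos d). pose proof ln2_pos.
  destruct (linear_le_geom (mu / 2 ^ d)) as [C [HC HCj]].
  { apply Rmult_lt_reg_r with (2 ^ d); [lra|].
    replace (mu / 2 ^ d * 2 ^ d) with mu by (field; lra). lra. }
  exists (2 ^ d * (1 + ln 2) * C). split; [apply Rmult_le_pos; nra|].
  intros J M HM.
  assert (Hpow : M ^ d <= 2 ^ d * (2 ^ d) ^ J).
  { apply Rle_trans with ((2 ^ S J) ^ d); [apply pow_incr; lra|].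
    rewrite <- !pow_mult, <- pow_add. apply Req_le. f_equal. lia. }
  assert (Hln : 1 + ln M <= (1 + ln 2) * (INR J + 1)).
  { assert (ln M <= (INR J + 1) * ln 2).
    { rewrite <- S_INR, <- ln_pow by lra. apply ln_le; lra. }
    pose proof (pos_INR J). nra. }
  assert (0 <= 1 + ln M) by (assert (0 <= ln M) by (rewrite <- ln_1; apply ln_le; lra); lra).
  assert (0 <= M ^ d) by (apply pow_le; lra).
  specialize (HCj J).
  replace (mu ^ J) with ((mu / 2 ^ d) ^ J * (2 ^ d) ^ J)
    by (rewrite <- Rpow_mult_distr; f_equal; field; lra).
  assert (0 <= (2 ^ d) ^ J) by (apply pow_le; lra).
  apply Rle_trans with (2 ^ d * (2 ^ d) ^ J * ((1 + ln 2) * (INR J + 1))).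
  - apply Rmult_le_compat; lra.
  - assert (0 <= 2 ^ d * (2 ^ d) ^ J * (1 + ln 2)) by (apply Rmult_le_pos; nra).
    replace (2 ^ d * (1 + ln 2) * C * ((mu / 2 ^ d) ^ J * (2 ^ d) ^ J))
      with (2 ^ d * (2 ^ d) ^ J * (1 + ln 2) * (C * (mu / 2 ^ d) ^ J)) by ring.
    rewrite <- Rmult_assoc. apply Rmult_le_compat_l; lra.
Qed.

Section OddDefect.

Variables (a b : R) (c : nat -> R) (k : nat).
Hypotheses (Ha : 0 < a) (Hb : 0 < b).

Lemma odd_defect_abs_le_geom mu : 2 ^ (k - 1) < mu ->
  exists A, 0 <= A /\ forall J m, (1 <= m)%nat -> (m < 2 ^ S J)%nat ->
    Rabs (odd_defect a b c k m) <= A * mu ^ J.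
Proof.
  intros Hmu. destruct (pow_mul_ln_le_geom (k - 1) mu Hmu) as [C [HC HCJ]].
  set (W := part_weight (a + b) c k). assert (HW : 0 <= W) by apply part_weight_nonneg.
  exists ((a + b) * W * (INR k + 1) * C).
  split; [pose proof (pos_INR k); repeat apply Rmult_le_pos; lra|].
  intros J m Hm HmJ.
  assert (HM : 1 <= INR m + 1 <= 2 ^ S J).
  { pose proof (pos_INR m). split; [lra|].
    rewrite <- INR_pow2, <- INR_1, <- plus_INR. apply le_INR. lia. }
  eapply Rle_trans; [apply odd_defect_abs_le; try assumption;
    intros u v Hu Hv Huv;
    apply (part_sol_sub_abs_le _ _ (INR m) u v); try assumption; apply (le_INR 1); lia|].
  specialize (HCJ J (INR m + 1) HM).
  replace ((a + b) * W * (INR k + 1) * C * mu ^ J) with ((a + b) * (W * (INR k + 1) * (C * mu ^ J)))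
    by ring.
  apply Rmult_le_compat_l; [lra|].
  fold W. rewrite !Rmult_assoc. apply Rmult_le_compat_l; [exact HW|].
  apply Rmult_le_compat_l; [pose proof (pos_INR k); lra|]. exact HCJ.
Qed.

Lemma odd_defect_abs_le_nonres : coefB (a + b) c k = 0 ->
  exists V, 0 <= V /\ forall m, (1 <= m)%nat ->
    Rabs (odd_defect a b c k m) <= V * (INR m + 1) ^ (k - 1).
Proof.
  intros HBk. set (W := part_weight (a + b) c k). assert (HW : 0 <= W) by apply part_weight_nonneg.
  exists ((a + b) * W * (INR k + 1)).
  split; [pose proof (pos_INR k); repeat apply Rmult_le_pos; lra|].
  intros m Hm.
  eapply Rle_trans; [apply odd_defect_abs_le; try assumption;
    intros u v Hu Hv Huv;
    apply (part_sol_sub_abs_le_nonres _ _ (INR m) u v); try assumption; apply (le_INR 1); lia|].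
  right. fold W. ring.
Qed.

End OddDefect.

Section DyadicBounds.

Variables (a b : R) (c : nat -> R) (k : nat) (x : nat -> R).
Hypotheses (Ha : 0 < a) (Hb : 0 < b) (Hrec : satisfies_rec a b c k x).

Definition hom_incr (n : nat) : R := hom_part a b c k x (n + 1) - hom_part a b c k x n.

Lemma hom_incr_double m : (1 <= m)%nat ->
  hom_incr (2 * m) = b * hom_incr m + odd_defect a b c k m.
Proof. intros Hm. unfold hom_incr. rewrite hom_double_succ, hom_double by assumption. ring. Qed.

Lemma hom_incr_double_succ m : (1 <= m)%nat ->
  hom_incr (2 * m + 1) = a * hom_incr m + - odd_defect a b c k m.
Proof.
  intros Hm. unfold hom_incr. replace (2 * m + 1 + 1)%nat with (2 * (m + 1))%nat by lia.
  rewrite hom_double_succ, hom_double by (assumption || lia). ring.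
Qed.

Lemma hom_incr_abs_le_geom mu A : Rmax a b < mu -> 1 <= mu -> 0 <= A ->
  (forall J m, (1 <= m)%nat -> (m < 2 ^ S J)%nat -> Rabs (odd_defect a b c k m) <= A * mu ^ J) ->
  exists K, 0 <= K /\ forall J n, (1 <= n)%nat -> (n < 2 ^ S J)%nat ->
    Rabs (hom_incr n) <= K * mu ^ J.
Proof.
  intros Hmu Hmu1 HA Hdef. set (mx := Rmax a b) in *.
  assert (Hamx : a <= mx) by apply Rmax_l. assert (Hbmx : b <= mx) by apply Rmax_r.
  set (K := Rmax (Rabs (hom_incr 1)) (A / (mu - mx))).
  assert (HK1 : Rabs (hom_incr 1) <= K) by apply Rmax_l.
  assert (HK0 : 0 <= K) by (pose proof (Rabs_pos (hom_incr 1)); lra).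
  (* K is chosen so that the defect fits into the gap between mx and mu *)
  assert (HKA : A <= K * (mu - mx)).
  { apply Rle_trans with (A / (mu - mx) * (mu - mx)); [right; field; lra|].
    apply Rmult_le_compat_r; [lra | apply Rmax_r]. }
  exists K. split; [exact HK0|]. induction J as [|J IH]; intros n Hn1 HnJ.
  { replace n with 1%nat by (simpl in HnJ; lia). simpl. lra. }
  assert (HmuJ : 1 <= mu ^ J) by (apply pow_R1_Rle; lra).
  change (mu ^ S J) with (mu * mu ^ J).
  destruct (Nat.eq_dec n 1) as [->|Hn].
  { assert (K <= K * (mu * mu ^ J)) by (rewrite <- Rmult_1_r at 1; apply Rmult_le_compat_l; nra).
    lra. }
  assert (Hstep : forall e r m, 0 < e <= mx -> (1 <= m)%nat -> (m < 2 ^ S J)%nat ->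
            Rabs r <= A * mu ^ J -> Rabs (e * hom_incr m + r) <= K * (mu * mu ^ J)).
  { intros e r m He Hm HmJ Hr. specialize (IH m Hm HmJ).
    eapply Rle_trans; [apply Rabs_triang|]. rewrite Rabs_mult, Rabs_right by lra.
    assert (e * Rabs (hom_incr m) <= mx * (K * mu ^ J))
      by (apply Rmult_le_compat; try lra; apply Rabs_pos).
    assert (A * mu ^ J <= K * (mu - mx) * mu ^ J) by (apply Rmult_le_compat_r; lra).
    nra. }
  destruct (nat_even_or_odd n) as [m [-> | ->]]; simpl in HnJ.
  - rewrite hom_incr_double by lia.
    apply Hstep; [lra | lia | simpl; lia | apply Hdef; simpl; lia].
  - rewrite hom_incr_double_succ by lia.
    apply Hstep; [lra | lia | simpl; lia | rewrite Rabs_Ropp; apply Hdef; simpl; lia].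
Qed.

Lemma hom_abs_le_dyadic d V : a + b <= 2 ^ d -> 0 <= V ->
  (forall m, (1 <= m)%nat -> Rabs (odd_defect a b c k m) <= V * (INR m + 1) ^ d) ->
  exists K, 0 <= K /\ forall J n, (1 <= n)%nat -> (n <= 2 ^ S J)%nat ->
    Rabs (hom_part a b c k x n) <= K * (INR J + 1) * (2 ^ d) ^ J.
Proof.
  intros Hs HV Hdef. set (q := 2 ^ d) in *. assert (Hq : 1 <= q) by (apply pow_R1_Rle; lra).
  set (K := Rmax (Rmax (Rabs (hom_part a b c k x 1)) (Rabs (hom_part a b c k x 2))) V).
  assert (HK1 : Rabs (hom_part a b c k x 1) <= K) by (unfold K; rewrite <- Rmax_l; apply Rmax_l).
  assert (HK2 : Rabs (hom_part a b c k x 2) <= K) by (unfold K; rewrite <- Rmax_l; apply Rmax_r).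
  assert (HKV : V <= K) by apply Rmax_r.
  assert (HK0 : 0 <= K) by lra.
  exists K. split; [exact HK0|]. induction J as [|J IH]; intros n Hn1 HnJ.
  { simpl in HnJ |- *. assert (n = 1 \/ n = 2)%nat as [-> | ->] by lia; lra. }
  assert (HqJ : 1 <= q ^ J) by (apply pow_R1_Rle; lra).
  assert (HJ : 0 <= INR J) by apply pos_INR.
  assert (HB : K * (INR J + 1) * q ^ J * q + K * (q * q ^ J) <= K * (INR (S J) + 1) * q ^ S J).
  { rewrite S_INR. change (q ^ S J) with (q * q ^ J). right. ring. }
  assert (HKq : 0 <= K * (q * q ^ J)) by (apply Rmult_le_pos; [lra | apply Rmult_le_pos; lra]).
  assert (HIH : forall m, (1 <= m)%nat -> (m <= 2 ^ S J)%nat ->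
            0 <= Rabs (hom_part a b c k x m) <= K * (INR J + 1) * q ^ J)
    by (intros m Hm HmJ; split; [apply Rabs_pos | apply IH; assumption]).
  destruct (Nat.eq_dec n 1) as [->|Hn].
  { assert (0 <= K * (INR J + 1) * q ^ J * q) by (repeat apply Rmult_le_pos; lra).
    assert (K <= K * (q * q ^ J)) by (rewrite <- (Rmult_1_r K) at 1; apply Rmult_le_compat_l; nra).
    lra. }
  destruct (nat_even_or_odd n) as [m [-> | ->]]; simpl in HnJ.
  - rewrite hom_double by (assumption || lia). rewrite Rabs_mult, Rabs_right by lra.
    specialize (HIH m ltac:(lia) ltac:(simpl; lia)).
    assert ((a + b) * Rabs (hom_part a b c k x m) <= q * (K * (INR J + 1) * q ^ J))
      by (apply Rmult_le_compat; lra).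
    lra.
  - rewrite hom_double_succ by (assumption || lia).
    pose proof (HIH m ltac:(lia) ltac:(simpl; lia)).
    pose proof (HIH (m + 1)%nat ltac:(lia) ltac:(simpl; lia)).
    assert (Hd : Rabs (odd_defect a b c k m) <= K * (q * q ^ J)).
    { eapply Rle_trans; [apply Hdef; lia|]. apply Rmult_le_compat; try lra.
      - apply pow_le. pose proof (pos_INR m); lra.
      - change (q * q ^ J) with (q ^ S J). unfold q. rewrite <- !pow_mult, Nat.mul_comm, pow_mult.
        apply pow_incr. split; [pose proof (pos_INR m); lra|].
        rewrite <- INR_pow2, <- INR_1, <- plus_INR. apply le_INR. simpl. lia. }
    eapply Rle_trans; [apply Rabs_triang|].
    eapply Rle_trans; [apply Rplus_le_compat_r, Rabs_triang|].
    rewrite !Rabs_mult, (Rabs_right a), (Rabs_right b) by lra.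
    nra.
Qed.

End DyadicBounds.

Lemma dyadic_bound_le_pow_ln (f : nat -> R) K d : 0 <= K ->
  (forall J n, (1 <= n)%nat -> (n <= 2 ^ S J)%nat -> Rabs (f n) <= K * (INR J + 1) * (2 ^ d) ^ J) ->
  forall n, (2 <= n)%nat -> Rabs (f n) <= 2 * K / ln 2 * (INR n ^ d * ln (INR n)).
Proof.
  intros HK Hf n Hn. pose proof ln2_pos. set (J := Nat.log2 n).
  destruct (Nat.log2_spec n ltac:(lia)) as [HJn HnJ]. fold J in HJn, HnJ.
  assert (HJ1 : (1 <= J)%nat) by (destruct J; simpl in HnJ; lia).
  assert (Hpow : 0 <= (2 ^ d) ^ J <= INR n ^ d).
  { split; [apply pow_le, pow_le; lra|].
    rewrite <- pow_mult, Nat.mul_comm, pow_mult. apply pow_incr.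
    split; [apply pow_le; lra|]. rewrite <- INR_pow2. apply le_INR, HJn. }
  assert (Hlog : INR J + 1 <= 2 / ln 2 * ln (INR n)).
  { assert (INR J * ln 2 <= ln (INR n)).
    { rewrite <- ln_pow by lra. apply ln_le; [apply two_pow_pos|].
      rewrite <- INR_pow2. apply le_INR, HJn. }
    assert (1 <= INR J) by (apply (le_INR 1), HJ1).
    apply Rmult_le_reg_r with (ln 2); [lra|].
    replace (2 / ln 2 * ln (INR n) * ln 2) with (2 * ln (INR n)) by (field; lra). nra. }
  eapply Rle_trans; [apply (Hf J); lia|].
  replace (2 * K / ln 2 * (INR n ^ d * ln (INR n))) with (K * (2 / ln 2 * ln (INR n)) * INR n ^ d)
    by (field; lra).
  pose proof (pos_INR J).
  apply Rmult_le_compat; [apply Rmult_le_pos; lra | lra | apply Rmult_le_compat_l; lra | lra].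
Qed.

Lemma hom_abs_le_pow_ln a b c k x : 0 < a -> 0 < b -> satisfies_rec a b c k x ->
  (1 <= k)%nat -> a + b <= 2 ^ (k - 1) ->
  exists C, forall n, (2 <= n)%nat ->
    Rabs (hom_part a b c k x n) <= C * (INR n ^ (k - 1) * ln (INR n)).
Proof.
  intros Ha Hb Hrec Hk Hs.
  assert (HBk : coefB (a + b) c k = 0).
  { apply coefB_nonres. assert (2 ^ (k - 1) < 2 ^ k) by (apply Rlt_pow; [lra | lia]). lra. }
  destruct (odd_defect_abs_le_nonres a b c k Ha Hb HBk) as [V [HV Hdef]].
  destruct (hom_abs_le_dyadic a b c k x Ha Hb Hrec (k - 1) V Hs HV Hdef) as [K [HK HKJ]].
  exists (2 * K / ln 2). exact (dyadic_bound_le_pow_ln _ K (k - 1) HK HKJ).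
Qed.

(** * The limit profile *)

Lemma geom_cauchy_lim (u : nat -> R) C q : 0 <= q < 1 ->
  (forall j, Rabs (u (S j) - u j) <= C * q ^ j) ->
  is_lim_seq u (real (Lim_seq u)) /\
  forall j, Rabs (real (Lim_seq u) - u j) <= C * q ^ j / (1 - q).
Proof.
  intros Hq Hu.
  assert (HC : 0 <= C).
  { specialize (Hu 0%nat). simpl in Hu. pose proof (Rabs_pos (u 1%nat - u 0%nat)). lra. }
  assert (Hgap : forall j d, Rabs (u (j + d)%nat - u j) <= C * q ^ j * (1 - q ^ d) / (1 - q)).
  { intros j d. induction d as [|d IH].
    - rewrite Nat.add_0_r, Rminus_diag, Rabs_R0. simpl. unfold Rdiv. rewrite Rminus_diag. lra.
    - replace (j + S d)%nat with (S (j + d)) by lia.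
      replace (u (S (j + d)) - u j) with ((u (S (j + d)) - u (j + d)%nat) + (u (j + d)%nat - u j))
        by ring.
      eapply Rle_trans; [apply Rabs_triang|].
      replace (C * q ^ j * (1 - q ^ S d) / (1 - q))
        with (C * q ^ (j + d) + C * q ^ j * (1 - q ^ d) / (1 - q))
        by (rewrite pow_add; simpl; field; lra).
      specialize (Hu (j + d)%nat). lra. }
  set (B j := C * q ^ j / (1 - q)).
  assert (Htail : forall j n, (j <= n)%nat -> Rabs (u n - u j) <= B j).
  { intros j n Hjn. replace n with (j + (n - j))%nat by lia.
    eapply Rle_trans; [apply Hgap|]. unfold B, Rdiv.
    apply Rmult_le_compat_r; [left; apply Rinv_0_lt_compat; lra|].
    assert (0 <= q ^ (n - j)) by (apply pow_le; lra).
    assert (0 <= C * q ^ j) by (apply Rmult_le_pos; [|apply pow_le]; lra). nra. }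
  assert (Hcauchy : ex_lim_seq_cauchy u).
  { intros eps.
    destruct (pow_lt_1_zero q ltac:(rewrite Rabs_right; lra) (eps * (1 - q) / (2 * (C + 1))))
      as [N HN]; [apply Rdiv_lt_0_compat; [apply Rmult_lt_0_compat; [apply cond_pos|]|]; lra|].
    specialize (HN N (le_n N)). rewrite Rabs_right in HN by (apply Rle_ge, pow_le; lra).
    assert (HBN : B N < eps / 2).
    { assert (0 <= q ^ N) by (apply pow_le; lra). pose proof (cond_pos eps).
      assert (HCq : (C + 1) * q ^ N < eps * (1 - q) / 2).
      { replace (eps * (1 - q) / 2) with ((C + 1) * (eps * (1 - q) / (2 * (C + 1))))
          by (field; lra).
        apply Rmult_lt_compat_l; lra. }
      apply Rmult_lt_reg_r with (1 - q); [lra|].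
      unfold B. replace (C * q ^ N / (1 - q) * (1 - q)) with (C * q ^ N) by (field; lra).
      nra. }
    exists N. intros n m Hn Hm.
    pose proof (Htail N n Hn). pose proof (Htail N m Hm).
    replace (u n - u m) with ((u n - u N) - (u m - u N)) by ring.
    eapply Rle_lt_trans; [apply Rabs_triang|]. rewrite Rabs_Ropp. lra. }
  destruct (proj2 (ex_lim_seq_cauchy_corr u) Hcauchy) as [l Hl].
  rewrite (is_lim_seq_unique _ _ Hl). simpl. split; [exact Hl|].
  intros j. change (Rbar_le (Rabs (l - u j)) (B j)).
  apply (is_lim_seq_le_loc (fun n => Rabs (u n - u j)) (fun _ => B j)).
  - exists j. apply Htail.
  - apply (is_lim_seq_abs _ (l - u j)), is_lim_seq_minus'; [exact Hl | apply is_lim_seq_const].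
  - apply is_lim_seq_const.
Qed.

Lemma Int_part_to_nat_spec r : 0 <= r ->
  INR (Z.to_nat (Int_part r)) <= r < INR (Z.to_nat (Int_part r)) + 1.
Proof.
  intros Hr. destruct (base_Int_part r) as [H1 H2].
  assert (0 <= Int_part r)%Z.
  { assert (Hgt : -1 < IZR (Int_part r)) by lra. apply lt_IZR in Hgt. lia. }
  rewrite INR_IZR_INZ, Z2Nat.id by assumption. lra.
Qed.

Lemma Int_part_to_nat_unique (N : nat) r : INR N <= r < INR N + 1 -> Z.to_nat (Int_part r) = N.
Proof.
  intros H. rewrite <- (Int_part_spec r (Z.of_nat N)); [apply Nat2Z.id|].
  rewrite <- INR_IZR_INZ. lra.
Qed.

Definition dfloor (j : nat) (u : R) : nat := Z.to_nat (Int_part (2 ^ j * u)).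

Lemma dfloor_spec j u : 0 <= u -> INR (dfloor j u) <= 2 ^ j * u < INR (dfloor j u) + 1.
Proof.
  intros Hu. apply Int_part_to_nat_spec, Rmult_le_pos; [apply pow_le; lra | exact Hu].
Qed.

Lemma dfloor_S j u : 0 <= u ->
  dfloor (S j) u = (2 * dfloor j u)%nat \/ dfloor (S j) u = (2 * dfloor j u + 1)%nat.
Proof.
  intros Hu. pose proof (dfloor_spec j u Hu) as [H1 H2]. unfold dfloor at 1 3.
  replace (2 ^ S j * u) with (2 * (2 ^ j * u)) by (simpl; ring).
  destruct (Rlt_dec (2 * (2 ^ j * u)) (2 * INR (dfloor j u) + 1)).
  - left. apply Int_part_to_nat_unique. rewrite mult_INR. simpl. lra.
  - right. apply Int_part_to_nat_unique. rewrite plus_INR, mult_INR. simpl. lra.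
Qed.

Lemma dfloor_INR j n : dfloor j (INR n) = (2 ^ j * n)%nat.
Proof. apply Int_part_to_nat_unique. rewrite mult_INR, INR_pow2. lra. Qed.

Lemma dfloor_bounds j p u : 1 <= u <= 2 ^ p ->
  (1 <= dfloor j u)%nat /\ (dfloor j u < 2 ^ S (j + p))%nat.
Proof.
  intros Hu. pose proof (dfloor_spec j u ltac:(lra)) as [H1 H2].
  assert (H2j : 1 <= 2 ^ j) by (apply pow_R1_Rle; lra).
  assert (2 ^ j * u <= 2 ^ j * 2 ^ p) by (apply Rmult_le_compat_l; lra).
  rewrite <- pow_add in H. pose proof (two_pow_pos (j + p)).
  split.
  - apply INR_lt. simpl. nra.
  - apply INR_lt. rewrite INR_pow2. simpl. lra.
Qed.

Lemma dfloor_close j u w : 0 <= u -> 0 <= w -> Rabs (2 ^ j * u - 2 ^ j * w) < 1 ->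
  dfloor j u = dfloor j w \/ dfloor j u = S (dfloor j w) \/ dfloor j w = S (dfloor j u).
Proof.
  intros Hu Hw H. pose proof (dfloor_spec j u Hu). pose proof (dfloor_spec j w Hw).
  apply Rabs_def2 in H.
  assert (INR (dfloor j u) < INR (dfloor j w + 2)) by (rewrite plus_INR; simpl; lra).
  assert (INR (dfloor j w) < INR (dfloor j u + 2)) by (rewrite plus_INR; simpl; lra).
  apply INR_lt in H2. apply INR_lt in H3. lia.
Qed.

Lemma real_Rbar_mult (r : R) (l : Rbar) : real (Rbar_mult r l) = r * real l.
Proof.
  destruct l; simpl; try reflexivity;
  repeat (destruct (Rle_dec _ _)); try destruct (Rle_lt_or_eq_dec _ _ _); simpl; ring.
Qed.

Lemma exists_two_pow_ge v : exists p : nat, v <= 2 ^ p.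
Proof.
  destruct (INR_unbounded v) as [p Hp]. exists p.
  pose proof (bernoulli_ineq 2 p ltac:(lra)). lra.
Qed.

Section Limit.

Variables (a b : R) (c : nat -> R) (k : nat) (x : nat -> R).
Hypotheses (Ha : 0 < a) (Hb : 0 < b) (Hrec : satisfies_rec a b c k x).

Definition hom_approx (j : nat) (u : R) : R := hom_part a b c k x (dfloor j u) / (a + b) ^ j.

Definition hom_limit (u : R) : R := real (Lim_seq (fun j => hom_approx j u)).

Lemma hom_pow2_mul j n : (1 <= n)%nat ->
  hom_part a b c k x (2 ^ j * n) = (a + b) ^ j * hom_part a b c k x n.
Proof.
  intros Hn. induction j as [|j IH]; [simpl; rewrite Nat.add_0_r; ring|].
  assert (1 <= 2 ^ j * n)%nat by (pose proof (Nat.pow_le_mono_r 2 0 j); simpl in *; nia).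
  replace (2 ^ S j * n)%nat with (2 * (2 ^ j * n))%nat by (simpl; lia).
  rewrite hom_double, IH by assumption. simpl. ring.
Qed.

Lemma hom_limit_INR n : (1 <= n)%nat -> hom_limit (INR n) = hom_part a b c k x n.
Proof.
  intros Hn. unfold hom_limit.
  rewrite (Lim_seq_ext _ (fun _ => hom_part a b c k x n)), Lim_seq_const; [reflexivity|].
  intros j. unfold hom_approx. rewrite dfloor_INR, hom_pow2_mul by assumption.
  field. apply pow_nonzero. lra.
Qed.

Lemma hom_limit_double u : hom_limit (2 * u) = (a + b) * hom_limit u.
Proof.
  unfold hom_limit.
  rewrite (Lim_seq_ext _ (fun j => (a + b) * hom_approx (S j) u)).
  - rewrite Lim_seq_scal_l, (Lim_seq_incr_1 (fun j => hom_approx j u)). apply real_Rbar_mult.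
  - intros j. unfold hom_approx, dfloor.
    replace (2 ^ j * (2 * u)) with (2 ^ S j * u) by (simpl; ring).
    simpl. field. split; [apply pow_nonzero|]; lra.
Qed.

Section Continuity.

Variables (mu K A : R).
Hypotheses (Hmu : 1 <= mu < a + b) (HK : 0 <= K) (HA : 0 <= A)
  (Hincr : forall J n, (1 <= n)%nat -> (n < 2 ^ S J)%nat ->
     Rabs (hom_incr a b c k x n) <= K * mu ^ J)
  (Hdef : forall J m, (1 <= m)%nat -> (m < 2 ^ S J)%nat ->
     Rabs (odd_defect a b c k m) <= A * mu ^ J).

Lemma hom_approx_step p j u : 1 <= u <= 2 ^ p ->
  Rabs (hom_approx (S j) u - hom_approx j u)
  <= (b * K + A) * mu ^ p / (a + b) * (mu / (a + b)) ^ j.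
Proof.
  intros Hu. assert (Hs : 0 < (a + b) ^ S j) by (apply pow_lt; lra).
  destruct (dfloor_bounds j p u Hu) as [N1 N2]. set (N := dfloor j u) in *.
  replace ((b * K + A) * mu ^ p / (a + b) * (mu / (a + b)) ^ j)
    with ((b * K + A) * mu ^ (j + p) / (a + b) ^ S j)
    by (unfold Rdiv; rewrite Rpow_mult_distr, pow_inv, pow_add; simpl; field;
        split; [apply pow_nonzero|]; lra).
  assert (0 <= mu ^ (j + p)) by (apply pow_le; lra).
  unfold hom_approx. fold N.
  destruct (dfloor_S j u ltac:(lra)) as [E|E]; rewrite E; fold N.
  - rewrite hom_double by assumption.
    replace ((a + b) * hom_part a b c k x N / (a + b) ^ S j - hom_part a b c k x N / (a + b) ^ j)
      with 0
      by (simpl; field; split; [apply pow_nonzero|]; lra).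
    rewrite Rabs_R0. apply Rdiv_le_0_compat; [apply Rmult_le_pos; [nra | assumption] | exact Hs].
  - rewrite hom_double_succ by assumption.
    replace ((a * hom_part a b c k x N + b * hom_part a b c k x (N + 1) + odd_defect a b c k N)
             / (a + b) ^ S j
             - hom_part a b c k x N / (a + b) ^ j)
      with ((b * hom_incr a b c k x N + odd_defect a b c k N) / (a + b) ^ S j)
      by (unfold hom_incr; simpl; field; split; [apply pow_nonzero|]; lra).
    unfold Rdiv. rewrite Rabs_mult, (Rabs_right (/ _))
      by (apply Rle_ge, Rlt_le, Rinv_0_lt_compat, Hs).
    apply Rmult_le_compat_r; [left; apply Rinv_0_lt_compat, Hs|].
    eapply Rle_trans; [apply Rabs_triang|]. rewrite Rabs_mult, (Rabs_right b) by lra.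
    pose proof (Hincr (j + p) N N1 N2). pose proof (Hdef (j + p) N N1 N2).
    assert (b * Rabs (hom_incr a b c k x N) <= b * (K * mu ^ (j + p)))
      by (apply Rmult_le_compat_l; lra).
    nra.
Qed.

Lemma hom_approx_close p j u w : 1 <= u <= 2 ^ p -> 1 <= w <= 2 ^ p ->
  Rabs (2 ^ j * u - 2 ^ j * w) < 1 ->
  Rabs (hom_approx j u - hom_approx j w) <= K * mu ^ p * (mu / (a + b)) ^ j.
Proof.
  intros Hu Hw Huw. assert (Hs : 0 < (a + b) ^ j) by (apply pow_lt; lra).
  replace (K * mu ^ p * (mu / (a + b)) ^ j) with (K * mu ^ (j + p) / (a + b) ^ j)
    by (unfold Rdiv; rewrite Rpow_mult_distr, pow_inv, pow_add; field; lra).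
  unfold hom_approx. unfold Rdiv. rewrite <- Rmult_minus_distr_r, Rabs_mult.
  rewrite (Rabs_right (/ _)) by (apply Rle_ge, Rlt_le, Rinv_0_lt_compat, Hs).
  apply Rmult_le_compat_r; [left; apply Rinv_0_lt_compat, Hs|].
  assert (0 <= mu ^ (j + p)) by (apply pow_le; lra).
  destruct (dfloor_bounds j p u Hu), (dfloor_bounds j p w Hw).
  destruct (dfloor_close j u w ltac:(lra) ltac:(lra) Huw) as [E|[E|E]]; rewrite E.
  - rewrite Rminus_diag, Rabs_R0. apply Rmult_le_pos; lra.
  - rewrite <- Nat.add_1_r. apply Hincr; lia.
  - rewrite Rabs_minus_sym, <- Nat.add_1_r. apply Hincr; lia.
Qed.

Let q := mu / (a + b).

Lemma ratio_bounds : 0 <= q < 1.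
Proof.
  unfold q. split; [apply Rdiv_le_0_compat; lra|].
  apply Rmult_lt_reg_r with (a + b); [lra|]. unfold Rdiv. rewrite Rmult_assoc, Rinv_l; lra.
Qed.

Lemma hom_limit_sub_approx_le p u j : 1 <= u <= 2 ^ p ->
  Rabs (hom_limit u - hom_approx j u) <= (b * K + A) * mu ^ p / (a + b) / (1 - q) * q ^ j.
Proof.
  intros Hu. pose proof ratio_bounds.
  replace ((b * K + A) * mu ^ p / (a + b) / (1 - q) * q ^ j)
    with ((b * K + A) * mu ^ p / (a + b) * q ^ j / (1 - q)) by (field; lra).
  refine (proj2 (geom_cauchy_lim (fun j => hom_approx j u) _ q ratio_bounds _) j).
  intros i. apply hom_approx_step, Hu.
Qed.

Lemma hom_limit_continuous v : 1 < v -> continuity_pt hom_limit v.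
Proof.
  intros Hv. destruct (exists_two_pow_ge (v + 1)) as [p Hp]. pose proof ratio_bounds as Hq.
  set (B1 := (b * K + A) * mu ^ p / (a + b) / (1 - q)). set (C2 := K * mu ^ p).
  assert (HB1 : 0 <= B1).
  { unfold B1. repeat apply Rdiv_le_0_compat; try lra.
    apply Rmult_le_pos; [nra | apply pow_le; lra]. }
  assert (HC2 : 0 <= C2) by (apply Rmult_le_pos; [|apply pow_le]; lra).
  unfold continuity_pt, continue_in, limit1_in, limit_in. simpl. unfold Rdist.
  intros eps Heps.
  (* a level N at which both approximation errors and the oscillation of hom_approx are small *)
  destruct (pow_lt_1_zero q ltac:(rewrite Rabs_right; lra) (eps / (2 * B1 + C2 + 1)))
    as [N HN]; [apply Rdiv_lt_0_compat; lra|].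
  specialize (HN N (le_n N)). rewrite Rabs_right in HN by (apply Rle_ge, pow_le; lra).
  assert (HqN : (2 * B1 + C2 + 1) * q ^ N < eps).
  { apply Rmult_lt_reg_l with (/ (2 * B1 + C2 + 1)); [apply Rinv_0_lt_compat; lra|].
    rewrite <- Rmult_assoc, Rinv_l, Rmult_1_l by lra. unfold Rdiv in HN. lra. }
  pose proof (two_pow_pos N).
  exists (Rmin (Rmin (v - 1) 1) (/ 2 ^ N)). split.
  { apply Rmin_pos; [apply Rmin_pos; lra | apply Rinv_0_lt_compat; lra]. }
  intros w [_ Hw].
  assert (Hw1 : Rabs (w - v) < v - 1)
    by (eapply Rlt_le_trans; [apply Hw|]; eapply Rle_trans; apply Rmin_l).
  assert (Hw2 : Rabs (w - v) < 1)
    by (eapply Rlt_le_trans; [apply Hw|]; eapply Rle_trans; [apply Rmin_l | apply Rmin_r]).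
  assert (Hw3 : Rabs (w - v) < / 2 ^ N) by (eapply Rlt_le_trans; [apply Hw | apply Rmin_r]).
  apply Rabs_def2 in Hw1. apply Rabs_def2 in Hw2.
  assert (Hwp : 1 <= w <= 2 ^ p) by lra. assert (Hvp : 1 <= v <= 2 ^ p) by lra.
  assert (Hclose : Rabs (2 ^ N * w - 2 ^ N * v) < 1).
  { rewrite <- Rmult_minus_distr_l, Rabs_mult, Rabs_right by lra.
    apply Rmult_lt_reg_l with (/ 2 ^ N); [apply Rinv_0_lt_compat; lra|].
    rewrite <- Rmult_assoc, Rinv_l, Rmult_1_l, Rmult_1_r by lra. exact Hw3. }
  pose proof (hom_approx_close p N w v Hwp Hvp Hclose) as Happrox. fold q C2 in Happrox.
  pose proof (hom_limit_sub_approx_le p w N Hwp) as Hlimw.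
  pose proof (hom_limit_sub_approx_le p v N Hvp) as Hlimv. fold q B1 in Hlimw, Hlimv.
  replace (hom_limit w - hom_limit v)
    with ((hom_limit w - hom_approx N w) + (hom_approx N w - hom_approx N v)
          - (hom_limit v - hom_approx N v)) by ring.
  unfold Rminus at 1. eapply Rle_lt_trans; [apply Rabs_triang|]. rewrite Rabs_Ropp.
  eapply Rle_lt_trans; [apply Rplus_le_compat_r, Rabs_triang|].
  assert (0 <= q ^ N) by (apply pow_le; lra).
  nra.
Qed.

End Continuity.

End Limit.

Lemma continuity_pt_ex_derive (f : R -> R) (t : R) : ex_derive f t -> continuity_pt f t.
Proof.
  intros Hf. apply continuity_pt_filterlim.
  apply (ex_derive_continuous (K := R_AbsRing) (V := R_NormedModule)), Hf.
Qed.

Lemma Rpower_log2 s : 0 < s -> Rpower 2 (log2 s) = s.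
Proof.
  intros Hs. pose proof ln2_pos. unfold Rpower, log2.
  replace (ln s / ln 2 * ln 2) with (ln s) by (field; lra). apply exp_ln, Hs.
Qed.

Lemma frac_log2_INR n : (1 <= n)%nat -> frac (log2 (INR n)) = log2 (INR n) - INR (Nat.log2 n).
Proof.
  intros Hn. set (l := Nat.log2 n). destruct (Nat.log2_spec n ltac:(lia)) as [Hl1 Hl2].
  fold l in Hl1, Hl2. pose proof ln2_pos.
  assert (A1 : INR l * ln 2 <= ln (INR n)).
  { rewrite <- ln_pow by lra. apply ln_le; [apply two_pow_pos|].
    rewrite <- INR_pow2. apply le_INR, Hl1. }
  assert (A2 : ln (INR n) < (INR l + 1) * ln 2).
  { rewrite <- S_INR, <- ln_pow by lra. apply ln_increasing; [apply lt_0_INR; lia|].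
    rewrite <- INR_pow2. apply lt_INR, Hl2. }
  unfold frac. symmetry.
  apply (Int_part_frac_part_spec (log2 (INR n)) (Z.of_nat l)); [|rewrite <- INR_IZR_INZ; ring].
  unfold log2. split.
  - apply Rmult_le_reg_r with (ln 2); [lra|]. field_simplify; lra.
  - apply Rmult_lt_reg_r with (ln 2); [lra|]. field_simplify; lra.
Qed.

Section Profile.

Variables (a b : R) (c : nat -> R) (k : nat) (x : nat -> R).
Hypotheses (Ha : 0 < a) (Hb : 0 < b) (Hrec : satisfies_rec a b c k x).

Definition hom_scaled (u : R) : R := Rpower u (- log2 (a + b)) * hom_limit a b c k x u.

(* The periodic factor of the term n^(log2 (α + β)). *)
Definition hom_profile (t : R) : R := hom_scaled (Rpower 2 t).

Lemma hom_scaled_double u : 0 < u -> hom_scaled (2 * u) = hom_scaled u.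
Proof.
  intros Hu. unfold hom_scaled. rewrite hom_limit_double by assumption.
  rewrite <- Rpower_mult_distr, Rpower_Ropp, Rpower_log2 by lra. field. lra.
Qed.

Lemma hom_scaled_two_pow_mul e u : 0 < u -> hom_scaled (2 ^ e * u) = hom_scaled u.
Proof.
  intros Hu. induction e as [|e IH]; [simpl; rewrite Rmult_1_l; reflexivity|].
  rewrite <- IH. replace (2 ^ S e * u) with (2 * (2 ^ e * u)) by (simpl; ring).
  apply hom_scaled_double, Rmult_lt_0_compat; [apply two_pow_pos | exact Hu].
Qed.

Lemma hom_scaled_continuous v : 2 ^ (k - 1) < a + b -> 1 < v -> continuity_pt hom_scaled v.
Proof.
  intros Hs Hv. set (mx := Rmax a b).
  assert (Hmx : mx < a + b) by (apply Rmax_lub_lt; lra).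
  set (mu := (Rmax mx (2 ^ (k - 1)) + (a + b)) / 2).
  pose proof (Rmax_l mx (2 ^ (k - 1))). pose proof (Rmax_r mx (2 ^ (k - 1))).
  assert (Rmax mx (2 ^ (k - 1)) < a + b) by (apply Rmax_lub_lt; lra).
  assert (Hmu1 : 1 <= mu) by (pose proof (pow_R1_Rle 2 (k - 1) ltac:(lra)); unfold mu; lra).
  destruct (odd_defect_abs_le_geom a b c k Ha Hb mu ltac:(unfold mu; lra)) as [A [HA Hdef]].
  destruct (hom_incr_abs_le_geom a b c k x Ha Hb Hrec mu A ltac:(fold mx; unfold mu; lra)
              Hmu1 HA Hdef)
    as [K [HK Hincr]].
  apply (continuity_pt_mult (fun u => Rpower u (- log2 (a + b)))).
  - apply continuity_pt_ex_derive. unfold Rpower. auto_derive. lra.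
  - apply (hom_limit_continuous a b c k x Ha Hb Hrec mu K A); try assumption.
    split; [exact Hmu1 | unfold mu; lra].
Qed.

Lemma hom_profile_periodic1_cont : 2 ^ (k - 1) < a + b -> periodic1_cont hom_profile.
Proof.
  intros Hs. split.
  - intros t0. assert (Ht0 : 0 < Rpower 2 t0) by apply exp_pos.
    destruct (exists_two_pow_ge (2 / Rpower 2 t0)) as [e He].
    apply continuity_pt_ext with (fun t => hom_scaled (2 ^ e * Rpower 2 t)).
    { intros t. apply hom_scaled_two_pow_mul, exp_pos. }
    apply (continuity_pt_comp (fun t => 2 ^ e * Rpower 2 t)).
    + apply continuity_pt_ex_derive. unfold Rpower. auto_derive. exact I.
    + apply hom_scaled_continuous; [exact Hs|].
      apply Rmult_le_compat_r with (r := Rpower 2 t0) in He; [|lra].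
      replace (2 / Rpower 2 t0 * Rpower 2 t0) with 2 in He by (field; lra). lra.
  - intros t. unfold hom_profile. rewrite Rpower_plus, Rpower_1, Rmult_comm by lra.
    apply hom_scaled_double, exp_pos.
Qed.

Lemma hom_profile_repr n : (1 <= n)%nat ->
  npow n (log2 (a + b)) * hom_profile (frac (log2 (INR n))) = hom_part a b c k x n.
Proof.
  intros Hn. assert (Hn0 : 0 < INR n) by (apply lt_0_INR; lia).
  rewrite frac_log2_INR by exact Hn. unfold hom_profile. set (l := Nat.log2 n).
  replace (Rpower 2 (log2 (INR n) - INR l)) with (INR n / 2 ^ l)
    by (unfold Rminus; rewrite Rpower_plus, Rpower_log2, Rpower_Ropp, Rpower_pow by lra;
        reflexivity).
  rewrite <- (hom_scaled_two_pow_mul l) by (apply Rdiv_lt_0_compat; [|apply two_pow_pos]; lra).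
  replace (2 ^ l * (INR n / 2 ^ l)) with (INR n) by (field; apply pow_nonzero; lra).
  unfold hom_scaled, npow. rewrite hom_limit_INR, <- Rmult_assoc, <- Rpower_plus by assumption.
  rewrite Rplus_opp_r, Rpower_O by exact Hn0. ring.
Qed.

End Profile.

(** * The five regimes *)

Lemma coefB_below s c d : 2 ^ d < s -> forall i, (i <= d)%nat -> coefB s c i = 0.
Proof.
  intros Hs i Hi. apply coefB_nonres. assert (2 ^ i <= 2 ^ d) by (apply Rle_pow; [lra | exact Hi]).
  lra.
Qed.

Lemma part_sol_last s c k t : (1 <= k)%nat ->
  part_sol s c k t = part_sol s c (k - 1) t + part_term s c k t.
Proof. intros Hk. unfold part_sol. replace k with (S (k - 1)) at 1 3 by lia. reflexivity. Qed.

Lemma part_sol_abs_le_pow s c d : (forall i, (i <= d)%nat -> coefB s c i = 0) ->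
  exists C, 0 <= C /\ forall n, (1 <= n)%nat -> Rabs (part_sol s c d (INR n)) <= C * INR n ^ d.
Proof.
  intros HB. exists (sum_f_R0 (fun i => Rabs (coefA s c i)) d). split.
  { apply cond_pos_sum. intros i. apply Rabs_pos. }
  intros n Hn. assert (1 <= INR n) by (apply (le_INR 1), Hn).
  unfold part_sol. eapply Rle_trans; [apply sum_f_R0_triangle|]. rewrite <- sum_f_R0_mult_r.
  apply sum_Rle. intros i Hi. unfold part_term.
  rewrite HB, Rmult_0_l, Rplus_0_r, Rabs_mult by exact Hi.
  apply Rmult_le_compat_l; [apply Rabs_pos|].
  rewrite Rabs_right by (apply Rle_ge, pow_le; lra). apply Rle_pow; assumption.
Qed.

Lemma part_sol_abs_le_pow_ln s c d :
  exists C, 0 <= C /\ forall n, (1 <= n)%nat ->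
    Rabs (part_sol s c d (INR n)) <= C * (INR n ^ d * (1 + ln (INR n))).
Proof.
  exists (part_weight s c d). split; [apply part_weight_nonneg|].
  intros n Hn. pose proof ln2_pos. assert (H1 : 1 <= INR n) by (apply (le_INR 1), Hn).
  assert (Hl : 0 <= ln (INR n)) by (rewrite <- ln_1; apply ln_le; lra).
  unfold part_sol, part_weight. eapply Rle_trans; [apply sum_f_R0_triangle|].
  rewrite <- sum_f_R0_mult_r. apply sum_Rle. intros i Hi. unfold part_term, log2.
  assert (Hp : 0 <= INR n ^ i <= INR n ^ d) by (split; [apply pow_le | apply Rle_pow]; lra || lia).
  pose proof (Rabs_pos (coefA s c i)). pose proof (Rabs_pos (coefB s c i)).
  eapply Rle_trans; [apply Rabs_triang|]. unfold Rdiv. rewrite !Rabs_mult.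
  rewrite (Rabs_right (INR n ^ i)), (Rabs_right (ln (INR n))), (Rabs_right (/ ln 2))
    by (apply Rle_ge; try apply Rlt_le, Rinv_0_lt_compat; lra).
  assert (0 <= / ln 2) by (left; apply Rinv_0_lt_compat; lra).
  assert (INR n ^ i <= INR n ^ d * (1 + ln (INR n))) by nra.
  assert (INR n ^ i * ln (INR n) <= INR n ^ d * (1 + ln (INR n))) by nra.
  assert (Rabs (coefA s c i) * INR n ^ i <= Rabs (coefA s c i) * (INR n ^ d * (1 + ln (INR n))))
    by (apply Rmult_le_compat_l; lra).
  assert (Rabs (coefB s c i) * / ln 2 * (INR n ^ i * ln (INR n))
          <= Rabs (coefB s c i) * / ln 2 * (INR n ^ d * (1 + ln (INR n))))
    by (apply Rmult_le_compat_l; [apply Rmult_le_pos|]; lra).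
  lra.
Qed.

Lemma bigO_of_abs_le (f g h : nat -> R) C N : 0 <= C ->
  (forall n, (N <= n)%nat -> Rabs (f n) <= C * g n) ->
  (forall n, (N <= n)%nat -> g n <= h n) -> bigO f h.
Proof.
  intros HC Hf Hg. exists C, N. intros n Hn.
  eapply Rle_trans; [apply Hf, Hn|]. apply Rmult_le_compat_l; [exact HC | apply Hg, Hn].
Qed.

Lemma pow_le_npow n d e : (1 <= n)%nat -> INR d <= e -> INR n ^ d <= npow n e.
Proof.
  intros Hn Hd. assert (1 <= INR n) by (apply (le_INR 1), Hn).
  unfold npow. rewrite <- Rpower_pow by lra. apply Rle_Rpower; assumption.
Qed.

Lemma npow_nonneg n e : 0 <= npow n e.
Proof. left. apply exp_pos. Qed.

Lemma log2_ge_of_two_pow_le y j : 2 ^ j <= y -> INR j <= log2 y.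
Proof.
  intros H. pose proof ln2_pos. pose proof (two_pow_pos j). unfold log2.
  apply Rmult_le_reg_r with (ln 2); [lra|].
  unfold Rdiv. rewrite Rmult_assoc, Rinv_l, Rmult_1_r by lra.
  rewrite <- ln_pow by lra. apply ln_le; assumption.
Qed.

Lemma ln_INR_ge_1 n : (3 <= n)%nat -> 1 <= ln (INR n).
Proof.
  intros Hn. rewrite <- (ln_exp 1). apply ln_le; [apply exp_pos|].
  pose proof exp_le_3. apply Rle_trans with 3; [assumption|].
  replace 3 with (INR 3) by (simpl; ring). apply le_INR, Hn.
Qed.

Lemma ln_INR_pow_ge_1 n e : (3 <= n)%nat -> 1 <= ln (INR n) ^ e.
Proof. intros Hn. apply pow_R1_Rle, ln_INR_ge_1, Hn. Qed.

Lemma const_periodic1_cont C : periodic1_cont (fun _ => C).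
Proof. split; [apply continuity_const; intros ? ?|intros ?]; reflexivity. Qed.

Section Expansions.

Variables (a b : R) (c : nat -> R) (k : nat) (x : nat -> R).
Hypotheses (Ha : 0 < a) (Hb : 0 < b) (Hk : (1 <= k)%nat) (Hrec : satisfies_rec a b c k x).

Lemma Rmax_ge_half_sum : (a + b) / 2 <= Rmax a b.
Proof. pose proof (Rmax_l a b). pose proof (Rmax_r a b). lra. Qed.

Lemma x_sub_hom_profile n : (1 <= n)%nat ->
  x n - npow n (log2 (a + b)) * hom_profile a b c k x (frac (log2 (INR n)))
  = part_sol (a + b) c k (INR n).
Proof.
  intros Hn. rewrite hom_profile_repr by assumption. unfold hom_part. ring.
Qed.

Lemma part_sol_sub_top_nonres n : coefB (a + b) c k = 0 ->
  part_sol (a + b) c k (INR n) - INR n ^ k * coefA (a + b) c k = part_sol (a + b) c (k - 1) (INR n).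
Proof.
  intros HBk. rewrite part_sol_last by exact Hk. unfold part_term. rewrite HBk. ring.
Qed.

Lemma x_expansion_1a : a + b > 2 ^ k -> 2 ^ k > Rmax a b ->
  exists Phi Psi, periodic1_cont Phi /\ periodic1_cont Psi /\
    bigO (fun n => x n - npow n (log2 (a + b)) * Phi (frac (log2 (INR n)))
                       - INR n ^ k * Psi (frac (log2 (INR n))))
         (fun n => npow n (log2 (Rmax a b))).
Proof.
  intros Hs Hm. pose proof Rmax_ge_half_sum.
  assert (Hk1 : 2 ^ k = 2 * 2 ^ (k - 1)) by (replace k with (S (k - 1)) at 1 by lia; reflexivity).
  exists (hom_profile a b c k x), (fun _ => coefA (a + b) c k).
  split; [apply hom_profile_periodic1_cont; auto; lra|]. split; [apply const_periodic1_cont|].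
  destruct (part_sol_abs_le_pow (a + b) c (k - 1) (coefB_below (a + b) c (k - 1) ltac:(lra)))
    as [C [HC HCn]].
  apply (bigO_of_abs_le _ (fun n => INR n ^ (k - 1)) _ C 1); [exact HC| |].
  - intros n Hn.
    rewrite x_sub_hom_profile, part_sol_sub_top_nonres by (try apply coefB_nonres; lra || lia).
    apply HCn, Hn.
  - intros n Hn. apply pow_le_npow; [exact Hn|]. apply log2_ge_of_two_pow_le. lra.
Qed.

Lemma x_expansion_1b : a + b > 2 ^ k -> Rmax a b >= 2 ^ k ->
  exists Phi, periodic1_cont Phi /\
    bigO (fun n => x n - npow n (log2 (a + b)) * Phi (frac (log2 (INR n))))
         (fun n => npow n (log2 (Rmax a b)) * ln (INR n) ^ iv (Rmax a b = 2 ^ k)).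
Proof.
  intros Hs Hm. pose proof (two_pow_pos (k - 1)).
  assert (Hk1 : 2 ^ k = 2 * 2 ^ (k - 1)) by (replace k with (S (k - 1)) at 1 by lia; reflexivity).
  exists (hom_profile a b c k x). split; [apply hom_profile_periodic1_cont; auto; lra|].
  destruct (part_sol_abs_le_pow (a + b) c k (coefB_below (a + b) c k ltac:(lra))) as [C [HC HCn]].
  apply (bigO_of_abs_le _ (fun n => INR n ^ k) _ C 3); [exact HC| |].
  - intros n Hn. rewrite x_sub_hom_profile by lia. apply HCn. lia.
  - intros n Hn. pose proof (ln_INR_pow_ge_1 n (iv (Rmax a b = 2 ^ k)) Hn).
    pose proof (npow_nonneg n (log2 (Rmax a b))).
    assert (INR n ^ k <= npow n (log2 (Rmax a b)))
      by (apply pow_le_npow; [lia | apply log2_ge_of_two_pow_le; lra]).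
    nra.
Qed.

Lemma x_expansion_2 : a + b = 2 ^ k ->
  exists Phi Psi, periodic1_cont Phi /\ periodic1_cont Psi /\
    forall eps, eps > 0 ->
    bigO (fun n => x n - INR n ^ k * ln (INR n) * Phi (frac (log2 (INR n)))
                       - INR n ^ k * Psi (frac (log2 (INR n))))
         (fun n => npow n (log2 (Rmax a b) + INR (iv (a = b)) * eps)).
Proof.
  intros Hs. pose proof Rmax_ge_half_sum. pose proof ln2_pos.
  assert (Hk1 : 2 ^ k = 2 * 2 ^ (k - 1)) by (replace k with (S (k - 1)) at 1 by lia; reflexivity).
  assert (HL : forall n, (1 <= n)%nat -> npow n (log2 (a + b)) = INR n ^ k).
  { intros n Hn. unfold npow, log2. rewrite Hs, ln_pow by lra.
    replace (INR k * ln 2 / ln 2) with (INR k) by (field; lra).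
    apply Rpower_pow, lt_0_INR. lia. }
  exists (fun _ => c k / ln 2), (hom_profile a b c k x).
  split; [apply const_periodic1_cont|]. split; [apply hom_profile_periodic1_cont; auto; lra|].
  intros eps Heps.
  destruct (part_sol_abs_le_pow (a + b) c (k - 1) (coefB_below (a + b) c (k - 1) ltac:(lra)))
    as [C [HC HCn]].
  apply (bigO_of_abs_le _ (fun n => INR n ^ (k - 1)) _ C 1); [exact HC| |].
  - intros n Hn.
    replace (x n - INR n ^ k * ln (INR n) * (c k / ln 2)
             - INR n ^ k * hom_profile a b c k x (frac (log2 (INR n))))
      with (part_sol (a + b) c (k - 1) (INR n)); [apply HCn, Hn|].
    transitivity (part_sol (a + b) c k (INR n) - INR n ^ k * ln (INR n) * (c k / ln 2)).
    + rewrite (part_sol_last _ _ k) by exact Hk. unfold part_term, log2.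
      rewrite coefA_res, coefB_res by exact Hs. field. lra.
    + rewrite <- x_sub_hom_profile, HL by exact Hn. ring.
  - intros n Hn. apply pow_le_npow; [exact Hn|].
    pose proof (log2_ge_of_two_pow_le (Rmax a b) (k - 1) ltac:(lra)).
    pose proof (pos_INR (iv (a = b))).
    assert (0 <= INR (iv (a = b)) * eps) by (apply Rmult_le_pos; lra). lra.
Qed.

Lemma x_expansion_3 : 2 ^ k > a + b -> a + b > 2 ^ (k - 1) ->
  exists Phi Psi, periodic1_cont Phi /\ periodic1_cont Psi /\
    forall eps, eps > 0 ->
    bigO (fun n => x n - INR n ^ k * Phi (frac (log2 (INR n)))
                       - npow n (log2 (a + b)) * Psi (frac (log2 (INR n))))
         (fun n => npow n (log2 (Rmax (Rmax a b) (2 ^ (k - 1)))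
                           + INR (iv (Rmax a b = 2 ^ (k - 1))) * eps)
                   * ln (INR n) ^ iv (Rmax a b < 2 ^ (k - 1))).
Proof.
  intros Hs1 Hs2. exists (fun _ => coefA (a + b) c k), (hom_profile a b c k x).
  split; [apply const_periodic1_cont|]. split; [apply hom_profile_periodic1_cont; auto; lra|].
  intros eps Heps.
  destruct (part_sol_abs_le_pow (a + b) c (k - 1) (coefB_below (a + b) c (k - 1) Hs2))
    as [C [HC HCn]].
  apply (bigO_of_abs_le _ (fun n => INR n ^ (k - 1)) _ C 3); [exact HC| |].
  - intros n Hn.
    replace (x n - INR n ^ k * coefA (a + b) c k
             - npow n (log2 (a + b)) * hom_profile a b c k x (frac (log2 (INR n))))
      with (part_sol (a + b) c k (INR n) - INR n ^ k * coefA (a + b) c k)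
      by (rewrite <- x_sub_hom_profile by lia; ring).
    rewrite part_sol_sub_top_nonres by (apply coefB_nonres; lra). apply HCn. lia.
  - intros n Hn. set (e := log2 (Rmax (Rmax a b) (2 ^ (k - 1)))
                           + INR (iv (Rmax a b = 2 ^ (k - 1))) * eps).
    pose proof (ln_INR_pow_ge_1 n (iv (Rmax a b < 2 ^ (k - 1))) Hn). pose proof (npow_nonneg n e).
    assert (INR n ^ (k - 1) <= npow n e).
    { apply pow_le_npow; [lia|]. unfold e.
      pose proof (log2_ge_of_two_pow_le _ (k - 1) (Rmax_r (Rmax a b) (2 ^ (k - 1)))).
      pose proof (pos_INR (iv (Rmax a b = 2 ^ (k - 1)))).
      assert (0 <= INR (iv (Rmax a b = 2 ^ (k - 1))) * eps) by (apply Rmult_le_pos; lra). lra. }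
    nra.
Qed.

Lemma x_expansion_4 E : 2 ^ (k - 1) >= a + b -> (1 <= E)%nat ->
  exists Phi, periodic1_cont Phi /\
    bigO (fun n => x n - INR n ^ k * Phi (frac (log2 (INR n))))
         (fun n => INR n ^ (k - 1) * ln (INR n) ^ E).
Proof.
  intros Hs HE. exists (fun _ => coefA (a + b) c k). split; [apply const_periodic1_cont|].
  destruct (part_sol_abs_le_pow_ln (a + b) c (k - 1)) as [C1 [HC1 HC1n]].
  destruct (hom_abs_le_pow_ln a b c k x Ha Hb Hrec Hk ltac:(lra)) as [C2 HC2n].
  apply (bigO_of_abs_le _ (fun n => INR n ^ (k - 1) * ln (INR n)) _ (2 * C1 + Rabs C2) 3).
  { pose proof (Rabs_pos C2). lra. }
  - intros n Hn.
    assert (Hl : 1 <= ln (INR n)) by (apply ln_INR_ge_1, Hn).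
    assert (Hp : 0 <= INR n ^ (k - 1)) by (apply pow_le, pos_INR).
    replace (x n - INR n ^ k * coefA (a + b) c k)
      with (part_sol (a + b) c (k - 1) (INR n) + hom_part a b c k x n).
    2:{ rewrite <- part_sol_sub_top_nonres by (apply coefB_nonres;
          assert (2 ^ (k - 1) < 2 ^ k) by (apply Rlt_pow; [lra | lia]); lra).
        unfold hom_part. ring. }
    eapply Rle_trans; [apply Rabs_triang|].
    pose proof (HC1n n ltac:(lia)). pose proof (HC2n n ltac:(lia)).
    assert (C1 * (INR n ^ (k - 1) * (1 + ln (INR n))) <= 2 * C1 * (INR n ^ (k - 1) * ln (INR n))).
    { replace (2 * C1 * (INR n ^ (k - 1) * ln (INR n)))
        with (C1 * (INR n ^ (k - 1) * (2 * ln (INR n)))) by ring.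
      apply Rmult_le_compat_l; [exact HC1|]. apply Rmult_le_compat_l; lra. }
    assert (C2 * (INR n ^ (k - 1) * ln (INR n)) <= Rabs C2 * (INR n ^ (k - 1) * ln (INR n)))
      by (apply Rmult_le_compat_r; [nra | apply Rle_abs]).
    lra.
  - intros n Hn. apply Rmult_le_compat_l; [apply pow_le, pos_INR|].
    replace E with (S (E - 1)) by lia. simpl.
    pose proof (ln_INR_pow_ge_1 n (E - 1) Hn). pose proof (ln_INR_ge_1 n Hn). nra.
Qed.

End Expansions.

Theorem mainTheorem4 (alpha beta : R) (c : nat -> R) (k : nat) (x : nat -> R)
  (Ha : 0 < alpha) (Hb : 0 < beta) (Hk : (1 <= k)%nat) (Hck : c k <> 0)
  (Hrec : satisfies_rec alpha beta c k x) :
  let m := Rmax alpha beta in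
  let L := log2 (alpha + beta) in
  (* (1a) *)
  (alpha + beta > 2 ^ k -> 2 ^ k > m ->
    exists Phi Psi, periodic1_cont Phi /\ periodic1_cont Psi /\
      bigO (fun n => x n - npow n L * Phi (frac (log2 (INR n)))
                         - INR n ^ k * Psi (frac (log2 (INR n))))
           (fun n => npow n (log2 m))) /\
  (* (1b) *)
  (alpha + beta > 2 ^ k -> m >= 2 ^ k ->
    exists Phi, periodic1_cont Phi /\
      bigO (fun n => x n - npow n L * Phi (frac (log2 (INR n))))
           (fun n => npow n (log2 m) * ln (INR n) ^ iv (m = 2 ^ k))) /\
  (* (2) *)
  (alpha + beta = 2 ^ k ->
    exists Phi Psi, periodic1_cont Phi /\ periodic1_cont Psi /\
      forall eps, eps > 0 ->
      bigO (fun n => x n - INR n ^ k * ln (INR n) * Phi (frac (log2 (INR n)))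
                         - INR n ^ k * Psi (frac (log2 (INR n))))
           (fun n => npow n (log2 m + INR (iv (alpha = beta)) * eps))) /\
  (* (3) *)
  (2 ^ k > alpha + beta -> alpha + beta > 2 ^ (k - 1) ->
    exists Phi Psi, periodic1_cont Phi /\ periodic1_cont Psi /\
      forall eps, eps > 0 ->
      bigO (fun n => x n - INR n ^ k * Phi (frac (log2 (INR n)))
                         - npow n L * Psi (frac (log2 (INR n))))
           (fun n => npow n (log2 (Rmax m (2 ^ (k - 1)))
                             + INR (iv (m = 2 ^ (k - 1))) * eps)
                     * ln (INR n) ^ iv (m < 2 ^ (k - 1)))) /\
  (* (4) *)
  (2 ^ (k - 1) >= alpha + beta ->
    let E := Nat.add 1 (Nat.mul (iv (alpha + beta = 2 ^ (k - 1)))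
               (Nat.add (iv ((2 <= k)%nat /\ c (k - 1)%nat <> 0))
                        (iv (k = 1%nat /\ rd0 beta c k x + rd1 beta c k x <> 0)))) in
    exists Phi, periodic1_cont Phi /\
      bigO (fun n => x n - INR n ^ k * Phi (frac (log2 (INR n))))
           (fun n => INR n ^ (k - 1) * ln (INR n) ^ E)).
Proof.
  intros m L. repeat split.
  - apply (x_expansion_1a alpha beta c k x); assumption.
  - apply (x_expansion_1b alpha beta c k x); assumption.
  - apply (x_expansion_2 alpha beta c k x); assumption.
  - apply (x_expansion_3 alpha beta c k x); assumption.
  - intros Hs E. apply (x_expansion_4 alpha beta c k x); [assumption .. | unfold E; lia].
Qed.
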